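(* Let $\mathcal{A}\subset[\mathbb{N}]^{<\infty}$ be nonempty and hereditary, let $P\subset\mathbb{N}$ be infinite and assume $\alpha_0=\mathbb{I}(\mathcal{A},P)<\omega_1$. Then there are an approximating family $(B_n(\alpha))_{n\in\mathbb{N},\alpha\text{ countable limit}}$, defining a transfinite family $(\mathcal{G}_\alpha)_{\alpha<\omega_1}$, and an infinite $L\subset P$ such that $$\mathcal{G}_{\alpha_0}^L\subset\mathcal{A}\cap[L]^{<\infty}\subset\mathcal{G}_{\alpha_0}\cap[L]^{<\infty}.$$
   Context: An approximating family assigns to each countable limit ordinal $\alpha$ finite sets $B_n(\alpha)\subset[0,\alpha)$, $n\in\mathbb{N}$, with $B_n(\alpha)\subset B_{n+1}(\alpha)$ and $\lim_n\max B_n(\alpha)=\alpha$. The transfinite family it defines: $\mathcal{G}_0=\{\emptyset\}$; $\mathcal{G}_{\beta+1}=\{\{n\}\cup E:n\in\mathbb{N},E\in\mathcal{G}_\beta\}\cup\{\emptyset\}$; for limit $\alpha$, $\mathcal{G}_\alpha=\{\emptyset\}\cup\{E\ne\emptyset:E\in\bigcup_{\beta\in B_{\min E}(\alpha)}\mathcal{G}_\beta\}$. For $L=\{l_1<l_2<\dots\}$, $\mathcal{G}^L=\{\{l_i:i\in E\}:E\in\mathcal{G}\}$. Fix any transfinite family $(\mathcal{F}_\alpha)$; a hereditary $\mathcal{A}$ is $\alpha$-large on an infinite $P$ if every infinite $M\subset P$ contains an infinite $N$ with $\mathcal{F}_\alpha^N\subset\mathcal{A}$ (this is independent of the transfinite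 family), and $\mathbb{I}(\mathcal{A},P)=\sup\{\alpha<\omega_1:\mathcal{A}\text{ is }\alpha\text{-large on }P\}$. Hereditary = closed under subsets; $[L]^{<\infty}$ = finite subsets of $L$. *)

From Stdlib Require List.
From mathcomp Require Import all_boot finmap.
Set Implicit Arguments. Unset Strict Implicit. Unset Printing Implicit Defensive.
Local Open Scope fset_scope.

(* (O, lt) is a strict well-order which is uncountable but all of whose proper
   initial segments are countable: any such structure is order-isomorphic to
   omega_1, so elements of O are exactly the countable ordinals. *)
Definition is_omega1 (O : Type) (lt : O -> O -> Prop) : Prop :=
  (forall a, ~ lt a a) /\
  (forall a b c, lt a b -> lt b c -> lt a c) /\
  (forall a b, lt a b \/ a = b \/ lt b a) /\
  well_founded lt /\
  (forall a : O, exists f : nat -> O, forall b, lt b a -> exists n, f n = b) /\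
  ~ (exists f : nat -> O, forall b, exists n, f n = b).

Section Ordinals.
Variables (O : Type) (lt : O -> O -> Prop).

Definition ole (a b : O) : Prop := lt a b \/ a = b.

Definition is_zero (a : O) : Prop := forall b, ~ lt b a.

Definition is_succ_of (a b : O) : Prop := lt b a /\ forall c, lt b c -> ole a c.

Definition is_limit (a : O) : Prop :=
  (exists b, lt b a) /\ (forall b, lt b a -> exists c, lt b c /\ lt c a).

(* Approximating family: for each limit alpha and n, a finite set B n alpha
   (a list) of ordinals < alpha, increasing in n, with max B_n(alpha) -> alpha.
   (Since max B_n(alpha) < alpha and is nondecreasing in n, the convergence
   amounts to: every gamma < alpha is exceeded by some element of some B_n.) *)
Definition approximating_family (B : nat -> O -> seq O) : Prop :=
  forall a, is_limit a ->
    [/\ (forall n b, List.In b (B n a) -> lt b a),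
        (forall n b, List.In b (B n a) -> List.In b (B n.+1 a))
      & (forall g, lt g a -> exists n b, List.In b (B n a) /\ lt g b)].

(* G is the transfinite family defined by B (characterized by its
   transfinite-recursive equations, which determine it uniquely). *)
Definition transfinite_family_of (B : nat -> O -> seq O)
    (G : O -> {fset nat} -> Prop) : Prop :=
  forall a,
    [/\ (is_zero a -> forall E, G a E <-> E = fset0),
        (forall b, is_succ_of a b -> forall E,
           G a E <-> (E = fset0 \/ exists n E', G b E' /\ E = n |` E'))
      & (is_limit a -> forall E,
           G a E <-> (E = fset0 \/
             exists n b, [/\ n \in E, (forall m, m \in E -> n <= m),
                             List.In b (B n a) & G b E]))].

End Ordinals.

Definition hereditary (A : {fset nat} -> Prop) : Prop :=
  forall E F, F `<=` E -> A E -> A F.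

Definition infinite_set (P : nat -> Prop) : Prop :=
  forall n, exists m, n <= m /\ P m.

Definition strictly_incr (f : nat -> nat) : Prop :=
  forall i j, i < j -> f i < f j.

(* F^N for N = {f 0 < f 1 < ...} : the image of E under the enumeration f *)
Definition spread (f : nat -> nat) (E : {fset nat}) : {fset nat} :=
  [fset f i | i in E].

Definition large_on (O : Type) (F : O -> {fset nat} -> Prop)
    (A : {fset nat} -> Prop) (a : O) (P : nat -> Prop) : Prop :=
  forall M : nat -> Prop, (forall m, M m -> P m) -> infinite_set M ->
    exists g, strictly_incr g /\ (forall i, M (g i)) /\
      (forall E, F a E -> A (spread g E)).

(* a0 = I(A,P) = sup {alpha < omega_1 : A alpha-large on P}, and it is < omega_1
   (i.e. the supremum exists as an element of O). *)
Definition is_index (O : Type) (lt : O -> O -> Prop) (F : O -> {fset nat} -> Prop)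
    (A : {fset nat} -> Prop) (P : nat -> Prop) (a0 : O) : Prop :=
  (forall a, large_on F A a P -> ole lt a a0) /\
  (forall b, (forall a, large_on F A a P -> ole lt a b) -> ole lt a0 b).

(* Since [A] is not [(a0 + 1)]-large on [P], there is an increasing sequence
   [h] in [P] along no subsequence of which [A] contains the spread of
   [G_(a0+1)].  By induction on [g], such a failure at [g + 1] puts, along a
   subsequence of [h], every set of [A] into [G_g], for every approximating
   family [B] that contains countably many prescribed ordinals [c < l] in its
   sets [B_m(l)]: a fusion argument makes the link [{E | {e} \cup E \in A}]
   of almost every term [e] caught, beyond [e], at some [c] below [g], so that
   [{e} \cup E \in G_(c+1)]; at a limit [g] one prescribes [c + 1 \in B_e(g)].
   A family meeting the prescriptions gives the upper inclusion.  Conversely,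
   the supremum [a0] is attained (at limits by another fusion), so along a
   subsequence [A] contains [G_a0] of the given family, whose family agrees
   with that of [B] along a further subsequence. *)

From mathcomp Require Import all_boot finmap zify.
From Stdlib Require Import Classical ClassicalEpsilon FunctionalExtensionality.
Set Implicit Arguments. Unset Strict Implicit. Unset Printing Implicit Defensive.
Local Open Scope fset_scope.
Local Open Scope nat_scope.

Section IncreasingSequences.
Implicit Types (f g h u : nat -> nat) (E Z : {fset nat}).

Lemma sincr_ltn f : strictly_incr f -> {mono f : m n / m < n}.
Proof. by move=> Hf; apply: leqW_mono; apply: leq_mono. Qed.

Lemma sincr_geq f x : strictly_incr f -> x <= f x.
Proof. by move=> Hf; elim: x => // x IH; apply: leq_ltn_trans IH (Hf _ _ _). Qed.

Lemma sincrS f : (forall x, f x < f x.+1) -> strictly_incr f.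
Proof. exact: homo_ltn ltn_trans. Qed.

Lemma sincr_id : strictly_incr id.
Proof. by []. Qed.

Lemma sincr_addn k : strictly_incr (addn k).
Proof. by move=> x y; rewrite ltn_add2l. Qed.

Lemma sincr_comp f g : strictly_incr f -> strictly_incr g ->
  strictly_incr (fun x => f (g x)).
Proof. by move=> Hf Hg x y /Hg /Hf. Qed.

Lemma sincr_factor g h : strictly_incr g -> strictly_incr h ->
  (forall x, exists y, h x = g y) ->
  exists2 w, strictly_incr w & h = (fun x => g (w x)).
Proof.
move=> Hg Hh /choice [w Hw]; exists w; last exact: functional_extensionality.
by move=> x y Hxy; rewrite -(sincr_ltn Hg) -!Hw; apply: Hh.
Qed.

Lemma infinite_enum (M : nat -> Prop) : infinite_set M ->
  exists2 h, strictly_incr h & forall i, M (h i).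
Proof.
move=> /(_ _)/constructive_indefinite_description next.
pose h := fix h i := proj1_sig (next (if i is j.+1 then (h j).+1 else 0)).
exists h => [|[|i]] /=; try by case: (next _) => ? [].
by apply: sincrS => x /=; case: (next _) => ? [].
Qed.

Lemma spread0 f : spread f fset0 = fset0.
Proof. exact: imfset0. Qed.

Lemma spreadU1 f n E : spread f (n |` E) = f n |` spread f E.
Proof. exact: imfsetU1. Qed.

Lemma spread_comp f g E : spread (fun x => f (g x)) E = spread f (spread g E).
Proof. exact: (imfset_comp _ g f). Qed.

Lemma spreadP f E m : m \in spread f E <-> exists2 x, x \in E & m = f x.
Proof.
split=> [/imfsetP [x /= Hx ->]|[x Hx ->]]; [by exists x | exact: in_imfset].
Qed.

Lemma mem_spread f E x : x \in E -> f x \in spread f E.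
Proof. by move=> Hx; apply/spreadP; exists x. Qed.

Lemma eq_in_spread f g E : {in E, f =1 g} -> spread f E = spread g E.
Proof. by move=> H; apply: eq_in_imfset => x /H. Qed.

Lemma spread_geq u i Z : strictly_incr u -> (forall z, z \in Z -> i <= z) ->
  forall z, z \in spread u Z -> i <= z.
Proof.
move=> Hu HZ _ /spreadP [x /HZ Hx ->]; exact: leq_trans Hx (sincr_geq _ Hu).
Qed.

End IncreasingSequences.

Lemma fset_min (E : {fset nat}) : E != fset0 ->
  exists2 n, n \in E & forall m, m \in E -> n <= m.
Proof.
move=> /fset0Pn Hex; have Hex' : exists n, n \in E by [].
by exists (ex_minn Hex'); case: ex_minnP.
Qed.

Definition fixes_below (i : nat) (u : nat -> nat) := forall x, x < i -> u x = x.

(* Passing from [g] to [g \o pad i t] keeps the first [i] terms of [g]. *)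
Definition pad (i : nat) (t : nat -> nat) x := if x < i then x else i + t x.

Lemma pad_incr i t : strictly_incr t -> strictly_incr (pad i t).
Proof.
move=> Ht; apply: sincrS => x; rewrite /pad.
have := sincr_geq x.+1 Ht; have := Ht x x.+1 (ltnSn x).
case: (ltnP x i); case: (ltnP x.+1 i); lia.
Qed.

Lemma pad_fixes i t : fixes_below i (pad i t).
Proof. by move=> x Hx; rewrite /pad Hx. Qed.

Lemma pad_geq i t x : i <= x -> pad i t x = i + t x.
Proof. by rewrite /pad ltnNge => ->. Qed.

Section Fusion.
Variable R : nat -> (nat -> nat) -> Prop.
Hypothesis R_refine : forall i g, strictly_incr g ->
  exists u, [/\ strictly_incr u, fixes_below i u & R i (fun x => g (u x))].
Hypothesis R_stable : forall i g u, strictly_incr g -> strictly_incr u ->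
  fixes_below i.+1 u -> R i g -> R i (fun x => g (u x)).

Let refine_ex i g : exists u, strictly_incr g ->
  [/\ strictly_incr u, fixes_below i u & R i (fun x => g (u x))].
Proof.
case: (classic (strictly_incr g)) => [/(R_refine i) [u Hu]|Hg]; first by exists u.
by exists id.
Qed.

Let refine i g := proj1_sig (constructive_indefinite_description _ (refine_ex i g)).

Let refineP i g : strictly_incr g ->
  [/\ strictly_incr (refine i g), fixes_below i (refine i g)
    & R i (fun x => g (refine i g x))].
Proof. exact: proj2_sig (constructive_indefinite_description _ (refine_ex i g)). Qed.

Variable g0 : nat -> nat.
Hypothesis g0_incr : strictly_incr g0.

Let stage := fix stage i :=
  if i is j.+1 then fun x => stage j (refine j (stage j) x) else g0.

Let stageS i : stage i.+1 = (fun x => stage i (refine i (stage i) x)).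
Proof. by []. Qed.

Let stage_incr i : strictly_incr (stage i).
Proof.
elim: i => // i IH; rewrite stageS; have [Hu _ _] := refineP i IH; exact: sincr_comp.
Qed.

Let stage_refines i j : i <= j ->
  exists2 U, fixes_below i U & stage j = (fun x => stage i (U x)).
Proof.
elim: j => [|j IH]; first by rewrite leqn0 => /eqP->; exists id.
rewrite leq_eqVlt => /orP[/eqP<-|Hij]; first by exists id.
case: (IH Hij) => U HU HUe; rewrite stageS {1}HUe.
have [_ Hfix _] := refineP j (stage_incr j).
exists (fun x => U (refine j (stage j) x)) => // x Hx.
by rewrite Hfix ?HU //; apply: leq_trans Hx Hij.
Qed.

(* The diagonal sequence: its [x]-th term is frozen from stage [x.+1] on. *)
Let diag x := stage x.+1 x.

Let diag_incr : strictly_incr diag.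
Proof.
apply: sincrS => x; rewrite /diag stageS.
have [Hu Hfix _] := refineP x.+1 (stage_incr x.+1).
rewrite (sincr_ltn (stage_incr x.+1)); exact: sincr_geq.
Qed.

Let diag_factor i :
  exists w, [/\ strictly_incr w, fixes_below i w & diag = (fun x => stage i (w x))].
Proof.
have Hval x : exists y, diag x = stage i y.
  case: (leqP i x.+1) => Hix.
    by case: (stage_refines Hix) => U _; rewrite /diag => ->; exists (U x).
  by case: (stage_refines (ltnW Hix)) => U HU ->; exists x; rewrite HU.
case: (sincr_factor (stage_incr i) diag_incr Hval) => w Hw Hdiag.
exists w; split=> // x Hx; apply: (incn_inj (leq_mono (stage_incr i))).
rewrite -[stage i (w x)]/((fun x => stage i (w x)) x) -Hdiag /diag.
by case: (stage_refines Hx) => U HU ->; rewrite HU.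
Qed.

Lemma fusion : exists2 w, strictly_incr w & forall i, R i (fun x => g0 (w x)).
Proof.
case: (diag_factor 0) => w [Hw _ Hdiag]; exists w => // i.
rewrite -[fun x => _]Hdiag; case: (diag_factor i.+1) => v [Hv Hfix ->].
have [Hr _ HR] := refineP i (stage_incr i).
rewrite stageS; exact: (R_stable (sincr_comp (stage_incr i) Hr) Hv Hfix HR).
Qed.

End Fusion.

(* The transfinite family of [B] as an inductive predicate; by [tfam_familyE]
   it is the only solution of the equations of [transfinite_family_of]. *)
Inductive tfam (O : Type) (lt : O -> O -> Prop) (B : nat -> O -> seq O) :
  O -> {fset nat} -> Prop :=
| tfam0 a : tfam lt B a fset0
| tfamS a b n E : is_succ_of lt a b -> tfam lt B b E -> tfam lt B a (n |` E)
| tfamL a b n E : is_limit lt a -> n \in E -> (forall m, m \in E -> n <= m) ->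
    List.In b (B n a) -> tfam lt B b E -> tfam lt B a E.
Arguments tfam0 {O lt B a}.
Arguments tfamS {O lt B a b n E}.
Arguments tfamL {O lt B a b n E}.

Section Ordinals.
Variables (O : Type) (lt : O -> O -> Prop).
Hypothesis HO : is_omega1 lt.

Lemma olt_irr a : ~ lt a a.
Proof. by case: HO => H _; apply: H. Qed.

Lemma olt_trans a b c : lt a b -> lt b c -> lt a c.
Proof. by case: HO => _ [H _]; apply: H. Qed.

Lemma olt_total a b : lt a b \/ a = b \/ lt b a.
Proof. by case: HO => _ [_ [H _]]; apply: H. Qed.

Lemma olt_wf : well_founded lt.
Proof. by case: HO => _ [_ [_ [H _]]]. Qed.

Lemma olt_asym a b : lt a b -> ~ lt b a.
Proof. by move=> Hab Hba; apply: (olt_irr (olt_trans Hab Hba)). Qed.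

Lemma olt_enum a : exists f : nat -> O, forall b, lt b a -> exists n, f n = b.
Proof. by case: HO => _ [_ [_ [_ [H _]]]]. Qed.

Lemma olt_enum_limit a : is_limit lt a ->
  exists f : nat -> O, (forall n, lt (f n) a) /\ forall b, lt b a -> exists n, f n = b.
Proof.
case=> [[b0 Hb0] _]; case: (olt_enum a) => f Hf.
have /choice [f' Hf'] : forall n, exists c, lt c a /\ (lt (f n) a -> c = f n).
  by move=> n; case: (classic (lt (f n) a)) => Hn; [exists (f n) | exists b0].
exists f'; split=> [n|b Hb]; first by case: (Hf' n).
by case: (Hf b Hb) => n Hn; exists n; case: (Hf' n) => _ ->; rewrite Hn.
Qed.

(* A largest ordinal would make [O] countable. *)
Lemma olt_unbounded a : exists c, lt a c.
Proof.
apply: NNPP => Hmax; case: HO => _ [_ [_ [_ [_ Hunc]]]]; apply: Hunc.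
case: (olt_enum a) => f Hf; exists (fun n => if n is k.+1 then f k else a) => b.
case: (olt_total b a) => [/Hf [n <-]|[->|Hab]]; [by exists n.+1 | by exists 0 |].
by case: Hmax; exists b.
Qed.

Lemma olt_min (S : O -> Prop) c : S c -> exists m, S m /\ forall d, S d -> ~ lt d m.
Proof.
elim/(well_founded_ind olt_wf): c => c IH Sc.
case: (classic (exists d, S d /\ lt d c)) => [[d [Sd Hdc]]|Hmin]; first exact: IH Hdc Sd.
by exists c; split=> // d Sd Hdc; apply: Hmin; exists d.
Qed.

Lemma succ_exists a : exists s, is_succ_of lt s a.
Proof.
case: (olt_unbounded a) => c Hc; case: (olt_min (S := lt a) Hc) => m [Ham Hmin].
exists m; split=> // d Had.
by case: (olt_total m d) => [|[|/(Hmin d Had)]]; [left|right|].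
Qed.

Definition osucc a := proj1_sig (constructive_indefinite_description _ (succ_exists a)).

Lemma osuccP a : is_succ_of lt (osucc a) a.
Proof. exact: proj2_sig (constructive_indefinite_description _ (succ_exists a)). Qed.

Lemma olt_succ a : lt a (osucc a).
Proof. by case: (osuccP a). Qed.

Lemma succ_unique s s' b : is_succ_of lt s b -> is_succ_of lt s' b -> s = s'.
Proof.
move=> [Hbs Hs] [Hbs' Hs'].
case: (Hs _ Hbs') => // Hss'; case: (Hs' _ Hbs) => // Hs's.
by case: (olt_asym Hss' Hs's).
Qed.

Lemma pred_unique a b b' : is_succ_of lt a b -> is_succ_of lt a b' -> b = b'.
Proof.
move=> [Hba Hb] [Hb'a Hb'].
case: (olt_total b b') => [Hbb'|[//|Hb'b]].
- by case: (Hb _ Hbb') => [/(olt_asym Hb'a)|Hab'] //; subst; case: (olt_irr Hb'a).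
- by case: (Hb' _ Hb'b) => [/(olt_asym Hba)|Hab] //; subst; case: (olt_irr Hba).
Qed.

Lemma succ_not_limit a b : is_succ_of lt a b -> ~ is_limit lt a.
Proof.
move=> [Hba Hb] [_ /(_ _ Hba) [c [Hbc Hca]]].
by case: (Hb _ Hbc) => [/(olt_asym Hca)|Hac] //; subst; case: (olt_irr Hca).
Qed.

Lemma limit_succ_lt a c : is_limit lt a -> lt c a -> lt (osucc c) a.
Proof.
move=> Hl Hca; have [_ Hc] := osuccP c.
case: (Hc _ Hca) => // Heq; case: (succ_not_limit (osuccP c)); by rewrite Heq.
Qed.

Lemma ordinal_cases a :
  is_zero lt a \/ (exists b, is_succ_of lt a b) \/ is_limit lt a.
Proof.
case: (classic (exists b, lt b a)) => [Hpos|Hzero].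
  2: by left => b Hb; apply: Hzero; exists b.
case: (classic (exists b, is_succ_of lt a b)) => [|Hns]; first by right; left.
right; right; split=> // b Hb; have [Hbs Hsb] := osuccP b.
case: (Hsb _ Hb) => Hsa; first by exists (osucc b).
by case: Hns; exists b; rewrite -Hsa; apply: osuccP.
Qed.

Section TransfiniteFamily.
Variable B : nat -> O -> seq O.
Hypothesis HB : approximating_family lt B.

Lemma approx_mono a n m b : is_limit lt a -> n <= m ->
  List.In b (B n a) -> List.In b (B m a).
Proof.
move=> Hl; case: (HB Hl) => _ HS _; elim: m => [|m IH]; first by rewrite leqn0 => /eqP->.
by rewrite leq_eqVlt => /orP[/eqP->//|/IH H /H /HS].
Qed.

Lemma approx_lt a n b : is_limit lt a -> List.In b (B n a) -> lt b a.
Proof. by move=> Hl; case: (HB Hl) => H _ _; apply: H. Qed.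

Lemma tfam_succ_inv a b E : is_succ_of lt a b -> tfam lt B a E ->
  E = fset0 \/ exists n E', E = n |` E' /\ tfam lt B b E'.
Proof.
move=> Hab HE; inversion HE; [by left | | by case: (succ_not_limit Hab)].
by right; exists n, E0; rewrite (pred_unique Hab H).
Qed.

Lemma tfam_limit_inv a E : is_limit lt a -> tfam lt B a E -> E != fset0 ->
  exists n b, [/\ n \in E, (forall m, m \in E -> n <= m), List.In b (B n a)
    & tfam lt B b E].
Proof.
move=> Hl HE; inversion HE; first by rewrite eqxx.
  by case: (succ_not_limit H).
by exists n, b.
Qed.

Lemma tfam_zero_inv a E : is_zero lt a -> tfam lt B a E -> E = fset0.
Proof.
move=> Hz HE; inversion HE => //; [case: H => /Hz [] | case: H => [[c /Hz []]]].
Qed.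

Lemma tfam_limit a b m0 E : is_limit lt a -> List.In b (B m0 a) -> tfam lt B b E ->
  (forall m, m \in E -> m0 <= m) -> tfam lt B a E.
Proof.
move=> Hl Hb HE Hge; case: (eqVneq E fset0) => [->|/fset_min [n Hn Hmin]].
  exact: tfam0.
exact: (tfamL Hl Hn Hmin (approx_mono Hl (Hge _ Hn) Hb) HE).
Qed.

Lemma tfam_spread u a E : strictly_incr u -> tfam lt B a E -> tfam lt B a (spread u E).
Proof.
move=> Hu; elim=> {a E} [a|a b n E Hab _ IH|a b n E Hl Hn Hmin Hb _ IH].
- by rewrite spread0; apply: tfam0.
- by rewrite spreadU1; apply: tfamS Hab IH.
- apply: (tfamL Hl (mem_spread u Hn)); last exact: IH.
    by move=> _ /spreadP [m /Hmin Hm ->]; rewrite (leq_mono Hu).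
  by apply: approx_mono Hb => //; apply: sincr_geq.
Qed.

Lemma tfam_succ a b E : is_succ_of lt a b -> tfam lt B b E -> tfam lt B a E.
Proof.
move=> Hab HE; case: (fset_0Vmem E) => [->|[x Hx]]; first exact: tfam0.
have /fsetUidPr <- : [fset x] `<=` E by rewrite fsub1set.
exact: tfamS Hab HE.
Qed.

Lemma tfam_sub a E F : tfam lt B a E -> F `<=` E -> tfam lt B a F.
Proof.
move=> HE; elim: HE F => {a E} [a|a b n E Hab _ IH|a b n E Hl Hn Hmin Hb _ IH] F HF.
- by move: HF; rewrite fsubset0 => /eqP->; apply: tfam0.
- case HnF: (n \in F).
  + rewrite -(fsetD1K HnF); apply: (tfamS Hab); apply: IH.
    apply/fsubsetP => z; rewrite in_fsetD1 => /andP[Hzn /(fsubsetP HF)].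
    by rewrite in_fset1U (negbTE Hzn).
  + apply: (tfam_succ Hab); apply: IH; apply/fsubsetP => z HzF.
    move/fsubsetP: HF => /(_ _ HzF); rewrite in_fset1U => /orP[/eqP Hz|//].
    by rewrite -Hz HzF in HnF.
- apply: (tfam_limit Hl Hb (IH _ HF)) => m /(fsubsetP HF); exact: Hmin.
Qed.

Lemma tfam_exch a E x y : tfam lt B a E -> x \in E -> y \notin E -> x < y ->
  tfam lt B a (y |` (E `\ x)).
Proof.
move=> HE; elim: HE x y => {a E} [a|a b n E Hab HE IH|a b n E Hl Hn Hmin Hb HE IH] x y.
- by rewrite inE.
- rewrite in_fset1U => Hx; rewrite in_fset1U negb_or => /andP[Hyn HyE] Hxy.
  case: (eqVneq x n) => [->|Hxn].
  + have -> : (n |` E) `\ n = E `\ n by apply/fsetP => z; rewrite !inE; case: eqP.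
    by apply: (tfamS Hab); apply: (tfam_sub HE); apply: fsubD1set.
  + rewrite (negbTE Hxn) /= in Hx.
    have -> : y |` ((n |` E) `\ x) = n |` (y |` (E `\ x)).
      apply/fsetP => z; rewrite !inE; case: (eqVneq z x) => [->|];
        by rewrite ?(negbTE Hxn) ?orbA ?[(z == y) || _]orbC.
    exact: (tfamS Hab (IH _ _ Hx HyE Hxy)).
- move=> Hx HyE Hxy; apply: (tfam_limit Hl Hb (IH _ _ Hx HyE Hxy)) => m.
  rewrite in_fset1U in_fsetD1 => /orP[/eqP->|/andP[_ /Hmin] //].
  exact: leq_trans (Hmin _ Hx) (ltnW Hxy).
Qed.

Lemma tfam_behead a b E m : is_succ_of lt a b -> tfam lt B a E -> m \in E ->
  (forall k, k \in E -> m <= k) -> tfam lt B b (E `\ m).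
Proof.
move=> Hab HE Hm Hmin.
case: (tfam_succ_inv Hab HE) => [HE0|[n [E' [HEq HE']]]]; first by rewrite HE0 inE in Hm.
subst E; case: (eqVneq n m) => [Hnm|Hnm].
  apply: (tfam_sub HE'); apply/fsubsetP => z.
  by rewrite in_fsetD1 in_fset1U Hnm => /andP[/negbTE-> /=].
case HnE': (n \in E').
  apply: (tfam_sub HE'); apply/fsubsetP => z; rewrite in_fsetD1 in_fset1U.
  by case/andP=> _ /orP[/eqP->|].
have HmE' : m \in E' by move: Hm; rewrite in_fset1U eq_sym (negbTE Hnm).
have Hmn : m < n by rewrite ltn_neqAle eq_sym Hnm Hmin ?fset1U1.
have -> : (n |` E') `\ m = n |` (E' `\ m).
  by apply/fsetP => z; rewrite !inE; case: (eqVneq z n) => [->|] //=; rewrite Hnm.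
by apply: tfam_exch; rewrite ?HnE'.
Qed.

Lemma tfam_lt_above a b : lt b a -> exists k, forall E, tfam lt B b E ->
  (forall m, m \in E -> k <= m) -> tfam lt B a E.
Proof.
elim/(well_founded_ind olt_wf): a b => a IH b Hba.
case: (ordinal_cases a) => [/(_ b Hba) //|[[c [Hca Hc]]|Hl]].
- have Hac : is_succ_of lt a c by split.
  case: (olt_total b c) => [Hbc|[->|Hcb]].
  + case: (IH c Hca b Hbc) => k Hk.
    by exists k => E HE HEk; apply: tfam_succ Hac (Hk E HE HEk).
  + by exists 0 => E HE _; apply: tfam_succ Hac HE.
  + by case: (Hc b Hcb) => [/(olt_asym Hba)|Heq] //; subst; case: (olt_irr Hba).
- case: (HB Hl) => _ _ /(_ b Hba) [m0 [b' [Hb' Hbb']]].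
  case: (IH b' (approx_lt Hl Hb') b Hbb') => k Hk.
  exists (maxn m0 k) => E HE HEk; apply: (tfam_limit Hl Hb').
    by apply: Hk => // m /HEk; rewrite geq_max => /andP[].
  by move=> m /HEk; rewrite geq_max => /andP[].
Qed.

Lemma tfam_familyE G :
  transfinite_family_of lt B G -> forall a E, G a E <-> tfam lt B a E.
Proof.
move=> HG a; elim/(well_founded_ind olt_wf): a => a IH E.
case: (HG a) => Hz Hsc Hlim; case: (ordinal_cases a) => [Ha0|[[b Hab]|Hl]].
- rewrite (Hz Ha0); split=> [->|]; [exact: tfam0 | exact: tfam_zero_inv].
- have Hba : lt b a by case: Hab.
  rewrite (Hsc _ Hab); split.
  + by case=> [->|[n [E' [/IH HE' ->]]]]; [apply: tfam0 | apply: tfamS Hab (HE' Hba)].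
  + case/(tfam_succ_inv Hab) => [->|[n [E' [-> HE']]]]; first by left.
    by right; exists n, E'; split=> //; apply/IH.
- rewrite (Hlim Hl); split.
  + case=> [->|[n [b [Hn Hmin Hb HGb]]]]; first exact: tfam0.
    by apply: (tfamL Hl Hn Hmin Hb); apply/IH => //; apply: approx_lt Hb.
  + move=> HE; case: (eqVneq E fset0) => [->|/(tfam_limit_inv Hl HE)]; first by left.
    case=> n [b [Hn Hmin Hb HGb]]; right; exists n, b; split=> //.
    by apply/IH => //; apply: approx_lt Hb.
Qed.

End TransfiniteFamily.
End Ordinals.

Section LargeAlongSequences.
Variables (O : Type) (lt : O -> O -> Prop).
Hypothesis HO : is_omega1 lt.
Variable B : nat -> O -> seq O.
Hypothesis HB : approximating_family lt B.

(* [large_on (tfam lt B) Q b] on all of [nat], phrased with sequences. *)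
Definition large_seq (Q : {fset nat} -> Prop) b := forall g, strictly_incr g ->
  exists2 u, strictly_incr u & forall Z, tfam lt B b Z -> Q (spread (fun x => g (u x)) Z).

Variable Q : {fset nat} -> Prop.

Lemma large_seq_all (bs : seq O) : (forall b, List.In b bs -> large_seq Q b) ->
  forall g, strictly_incr g -> exists2 u, strictly_incr u &
    forall b, List.In b bs -> forall Z, tfam lt B b Z -> Q (spread (fun x => g (u x)) Z).
Proof.
elim: bs => [|b bs IH] Hbs g Hg; first by exists id.
case: (IH (fun b' Hb' => Hbs b' (or_intror Hb')) g Hg) => u1 Hu1 HQ1.
case: (Hbs b (or_introl erefl) _ (sincr_comp Hg Hu1)) => u2 Hu2 HQ2.
exists (fun x => u1 (u2 x)); first exact: sincr_comp.
move=> b' [<- //|Hb'] Z HZ; rewrite (spread_comp (fun x => g (u1 x))).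
exact: HQ1 Hb' _ (tfam_spread HB Hu2 HZ).
Qed.

Lemma large_seq_limit a : is_limit lt a -> (forall b, lt b a -> large_seq Q b) ->
  large_seq Q a.
Proof.
move=> Hl Hlarge g0 Hg0.
pose R i t := forall b, List.In b (B i a) -> forall Z, tfam lt B b Z ->
  (forall z, z \in Z -> i <= z) -> Q (spread t Z).
have R_refine i g : strictly_incr g ->
    exists u, [/\ strictly_incr u, fixes_below i u & R i (fun x => g (u x))].
  move=> Hg; have Hgi : strictly_incr (fun y => g (i + y)) := sincr_comp Hg (sincr_addn i).
  have Hbs b : List.In b (B i a) -> large_seq Q b.
    by move=> Hb; apply: Hlarge; apply: (approx_lt HB Hl Hb).
  case: (large_seq_all Hbs Hgi) => u Hu HQ.
  exists (pad i u); split; [exact: pad_incr | exact: pad_fixes |].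
  move=> b Hb Z HZ Hge; rewrite (eq_in_spread (g := fun x => g (i + u x))).
    exact: HQ Hb _ HZ.
  by move=> x /Hge Hx; rewrite pad_geq.
have R_stable i g u : strictly_incr g -> strictly_incr u -> fixes_below i.+1 u ->
    R i g -> R i (fun x => g (u x)).
  move=> _ Hu _ HR b Hb Z HZ Hge; rewrite spread_comp.
  exact: HR Hb _ (tfam_spread HB Hu HZ) (spread_geq Hu Hge).
case: (fusion R_refine R_stable Hg0) => w Hw HR; exists w => // E HE.
case: (eqVneq E fset0) => [->|/(tfam_limit_inv HO Hl HE) [n [b [_ Hmin Hb HbE]]]].
  case: Hl => [[b /Hlarge /(_ id sincr_id) [u _ Hu]]] _.
  by move: (Hu _ tfam0); rewrite !spread0.
exact: HR Hb _ HbE Hmin.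
Qed.

End LargeAlongSequences.

Lemma tfam_compare (O : Type) (lt : O -> O -> Prop) (B B' : nat -> O -> seq O) a :
  is_omega1 lt -> approximating_family lt B -> approximating_family lt B' ->
  large_seq lt B (tfam lt B' a) a.
Proof.
move=> HO HB HB'; elim/(well_founded_ind (olt_wf HO)): a => a IH.
case: (ordinal_cases HO a) => [Hz|[[b Hab]|Hl]].
- move=> g Hg; exists id => // E /(tfam_zero_inv Hz) ->.
  by rewrite spread0; apply: tfam0.
- move=> g Hg; have [Hba _] := Hab.
  case: (IH b Hba g Hg) => u Hu HE'; exists u => // E.
  case/(tfam_succ_inv HO Hab) => [->|[n [E' [-> /HE' HE]]]].
    by rewrite spread0; apply: tfam0.
  by rewrite spreadU1; apply: tfamS Hab HE.
- apply: (large_seq_limit HO HB Hl) => b Hba g Hg.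
  have [_ _ /(_ b Hba) [m0 [b' [Hb' Hbb']]]] := HB' a Hl.
  case: (tfam_lt_above HO HB' Hbb') => k Hk.
  have HgK : strictly_incr (fun y => g (m0 + k + y)) := sincr_comp Hg (sincr_addn _).
  case: (IH b Hba _ HgK) => u Hu HE'.
  exists (fun x => m0 + k + u x); first exact: (sincr_comp (sincr_addn _) Hu).
  move=> Z HZ; set Z' := spread _ Z.
  have HZ'ge z : z \in Z' -> m0 + k <= z.
    by case/spreadP=> x _ ->; apply: leq_trans (sincr_geq _ Hg); apply: leq_addr.
  apply: (tfam_limit HB' Hl Hb'); last by move=> z /HZ'ge; apply: leq_trans; apply: leq_addr.
  by apply: Hk (HE' _ HZ) _ => z /HZ'ge; apply: leq_trans; apply: leq_addl.
Qed.

Definition link (A : {fset nat} -> Prop) (n : nat) (E : {fset nat}) := A (n |` E).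

Lemma link_hereditary A n : hereditary A -> hereditary (link A n).
Proof. by move=> HA E F HFE; apply: HA; apply: fsetUS. Qed.

Lemma hereditary0 A E : hereditary A -> A E -> A fset0.
Proof. by move=> HA; apply: HA; apply: fsub0set. Qed.

Section Requirements.
Variables (O : Type) (lt : O -> O -> Prop).

(* [req l m] lists ordinals that an approximating family must put into
   [B_m(l)]; they must lie below [l]. *)
Definition req_below (req : O -> nat -> seq O) :=
  forall l m c, List.In c (req l m) -> lt c l.

Definition meets (req : O -> nat -> seq O) (B : nat -> O -> seq O) (E : {fset nat}) :=
  forall l m c, m \in E -> List.In c (req l m) -> List.In c (B m l).

(* Fixed requirements force the sets of [A] contained in [X] into [G_c],
   whatever the family meeting them. *)
Definition caught c (A : {fset nat} -> Prop) (X : nat -> Prop) :=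
  exists req, req_below req /\ forall B E, A E -> (forall m, m \in E -> X m) ->
    meets req B E -> tfam lt B c E.

Lemma caught_sub c A X Y : (forall m, Y m -> X m) -> caught c A X -> caught c A Y.
Proof.
move=> HYX [req [Hreq HA]]; exists req; split=> // B E HE HEY.
by apply: HA => // m /HEY /HYX.
Qed.

Definition req_sum (rq : nat -> O -> nat -> seq O) l m :=
  List.flat_map (fun k => rq k l m) (List.seq 0 m.+1).

Lemma req_sumP rq l m c :
  List.In c (req_sum rq l m) <-> exists k, k <= m /\ List.In c (rq k l m).
Proof.
rewrite List.in_flat_map; split=> -[k [Hk Hc]]; exists k; split=> //.
- by move/List.in_seq: Hk; lia.
- by apply/List.in_seq; lia.
Qed.

Lemma req_sum_below rq : (forall k, req_below (rq k)) -> req_below (req_sum rq).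
Proof. by move=> Hrq l m c /req_sumP [k [_ /Hrq]]. Qed.

Definition req_cat (r1 r2 : O -> nat -> seq O) l m := r1 l m ++ r2 l m.

Lemma req_cat_below r1 r2 : req_below r1 -> req_below r2 -> req_below (req_cat r1 r2).
Proof. by move=> H1 H2 l m c /List.in_app_iff [/H1|/H2]. Qed.

Lemma meets_cat r1 r2 B E : meets (req_cat r1 r2) B E -> meets r1 B E /\ meets r2 B E.
Proof.
by move=> HB; split=> l m c Hm Hc; apply: HB Hm _; apply/List.in_app_iff; [left|right].
Qed.

End Requirements.

Definition tail (f : nat -> nat) i m := exists2 x, i < x & f x = m.

Lemma split_min (A : {fset nat} -> Prop) f s (E : {fset nat}) :
  strictly_incr f -> strictly_incr s -> A E ->
  (forall m, m \in E -> exists x, f (s x) = m) -> E != fset0 ->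
  exists k, [/\ f (s k) \in E, (forall m, m \in E -> f (s k) <= m),
    link A (f (s k)) (E `\ f (s k)) & forall m, m \in E `\ f (s k) -> tail f (s k) m].
Proof.
move=> Hf Hs HAE Hrng /fset_min [e He Hmin]; case: (Hrng e He) => k Hk; exists k.
rewrite Hk; split=> //; first by rewrite /link fsetD1K.
move=> m; rewrite in_fsetD1 => /andP[Hme HmE]; case: (Hrng m HmE) => x Hx.
exists (s x) => //; rewrite -(sincr_ltn Hf) Hx Hk.
by rewrite ltn_neqAle eq_sym (negbTE Hme) Hmin.
Qed.

Section UpperBound.
Variables (O : Type) (lt : O -> O -> Prop).
Hypothesis HO : is_omega1 lt.
Variable Bfix : nat -> O -> seq O.
Hypothesis HBfix : approximating_family lt Bfix.

Definition never_large (A : {fset nat} -> Prop) a (h : nat -> nat) :=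
  forall t, strictly_incr t ->
    ~ (forall E, tfam lt Bfix a E -> A (spread (fun x => h (t x)) E)).

Definition upper_bound g := forall A, hereditary A -> forall h, strictly_incr h ->
  never_large A (osucc HO g) h ->
  exists2 w, strictly_incr w & caught lt g A (fun m => exists x, h (w x) = m).

Definition dichotomy (P : O -> Prop) g (a : {fset nat} -> Prop) (r : nat -> nat) :=
  (exists2 t, strictly_incr t &
     exists2 c, P c & caught lt c a (fun m => exists x, r (t x) = m)) \/
  (exists2 t, strictly_incr t &
     forall Z, tfam lt Bfix g Z -> a (spread (fun x => r (t x)) Z)).

Section TailLinks.
Variables (P : O -> Prop) (g : O) (A : {fset nat} -> Prop) (h : nat -> nat).
Hypotheses (HA : hereditary A) (Hh : strictly_incr h) (HN : never_large A (osucc HO g) h).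
Hypothesis Hdich : forall a, hereditary a -> forall r, strictly_incr r -> dichotomy P g a r.

Let good i r :=
  exists2 c, P c & caught lt c (link A (h (r i))) (tail (fun x => h (r x)) i).

Let R i r := good i r \/ forall Z, tfam lt Bfix g Z -> (forall z, z \in Z -> i < z) ->
  link A (h (r i)) (spread (fun x => h (r x)) Z).

Let R_refine i r : strictly_incr r ->
  exists u, [/\ strictly_incr u, fixes_below i u & R i (fun x => r (u x))].
Proof.
move=> Hr; pose r' y := h (r (i.+1 + y)).
have Hr' : strictly_incr r' := sincr_comp Hh (sincr_comp Hr (sincr_addn _)).
have Hpad t : strictly_incr t ->
    [/\ strictly_incr (pad i.+1 t), fixes_below i (pad i.+1 t) & pad i.+1 t i = i].
  by split; [apply: pad_incr | move=> x Hx; apply: pad_fixes; apply: leqW | apply: pad_fixes].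
case: (Hdich (link_hereditary (n := h (r i)) HA) Hr') => [[t Ht [c Hc Hcaught]]|[t Ht HZ]];
  have [Hu Hfix Hi] := Hpad t Ht; exists (pad i.+1 t); split=> //; rewrite /R /good Hi.
- left; exists c => //; apply: caught_sub Hcaught => _ [x Hix <-].
  by exists x; rewrite pad_geq.
- right => Z HZg Hge; rewrite (eq_in_spread (g := fun x => r' (t x))); first exact: HZ.
  by move=> x /Hge Hx; rewrite pad_geq.
Qed.

Let R_stable i r u : strictly_incr r -> strictly_incr u -> fixes_below i.+1 u ->
  R i r -> R i (fun x => r (u x)).
Proof.
move=> Hr Hu Hfix; have Hui : u i = i by apply: Hfix.
rewrite /R /good Hui => -[[c Hc Hcaught]|Hright]; [left; exists c => // | right].
- apply: caught_sub Hcaught => _ [x Hix <-]; exists (u x) => //.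
  by rewrite -Hui (sincr_ltn Hu).
- move=> Z HZ Hge; rewrite (spread_comp (fun x => h (r x))).
  exact: Hright _ (tfam_spread HBfix Hu HZ) (spread_geq Hu Hge).
Qed.

(* Diagonalize so that every position decides between the two alternatives;
   cofinitely many positions of the second kind would make [A] contain
   [G_(g+1)] spread along a subsequence of [h]. *)
Lemma tail_links : exists2 w, strictly_incr w & exists2 s, strictly_incr s &
  forall k, exists2 c, P c &
    caught lt c (link A (h (w (s k)))) (tail (fun x => h (w x)) (s k)).
Proof.
case: (fusion R_refine R_stable sincr_id) => w Hw HR; exists w => //.
case: (classic (infinite_set (fun i => good i w))) => [/infinite_enum [s Hs Hgood]|Hfin].
  by exists s.
have [n Hn] : exists n, forall i, n <= i -> forall Z, tfam lt Bfix g Z ->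
    (forall z, z \in Z -> i < z) -> link A (h (w i)) (spread (fun x => h (w x)) Z).
  apply: NNPP => Hc; apply: Hfin => n; apply: NNPP => Hc2; apply: Hc; exists n => i Hi.
  by case: (HR i) => // Hgi; case: Hc2; exists i.
case: (HN (sincr_comp Hw (sincr_addn n))) => E HE.
rewrite (spread_comp (fun x => h (w x)) (addn n)).
have := tfam_spread HBfix (sincr_addn n) HE; set E' := spread _ E => HE'.
have HE'n z : z \in E' -> n <= z by case/spreadP=> x _ ->; apply: leq_addr.
case: (eqVneq E' fset0) => [->|/fset_min [m Hm Hmin]].
  rewrite spread0; apply: (hereditary0 (E := [fset h (w n)]) HA).
  by have := Hn n (leqnn n) fset0 tfam0; rewrite spread0 /link fsetU0; apply=> z; rewrite inE.
rewrite -(fsetD1K Hm) spreadU1; apply: (Hn m (HE'n m Hm)).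
  exact: (tfam_behead HO HBfix (osuccP HO g) HE' Hm Hmin).
move=> z; rewrite in_fsetD1 => /andP[Hzm /Hmin].
by rewrite leq_eqVlt eq_sym (negbTE Hzm).
Qed.

End TailLinks.

(* The requirements caught at each [c k] are merged, only those of index [k]
   being imposed above the [k]-th element [f (s k)]. *)
Lemma caught_links (A : {fset nat} -> Prop) f s (c : nat -> O) :
  strictly_incr f -> strictly_incr s ->
  (forall k, caught lt (c k) (link A (f (s k))) (tail f (s k))) ->
  exists req, req_below lt req /\ forall B E, A E ->
    (forall m, m \in E -> exists x, f (s x) = m) -> meets req B E -> E != fset0 ->
    exists k, [/\ f (s k) \in E, (forall m, m \in E -> f (s k) <= m)
      & tfam lt B (osucc HO (c k)) E].
Proof.
move=> Hf Hs /choice [rq Hrq]; pose e k := f (s k).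
exists (req_sum (fun k l m => if e k < m then rq k l m else [::])); split.
  by apply: req_sum_below => k l m c'; case: ifP => // _ /(proj1 (Hrq k)).
move=> B E HAE Hrng Hmeets HE0.
case: (split_min Hf Hs HAE Hrng HE0) => k [Hek Hmin Hlink Htail]; exists k; split=> //.
rewrite -(fsetD1K Hek); apply: (tfamS (osuccP HO (c k))).
apply: (proj2 (Hrq k) B _ Hlink Htail) => l m c' Hm Hc'.
have [Hme HmE] : m != e k /\ m \in E by move: Hm; rewrite in_fsetD1 => /andP.
have Hem : e k < m by rewrite ltn_neqAle eq_sym Hme Hmin.
apply: (Hmeets l m c' HmE); apply/req_sumP; exists k; rewrite Hem; split=> //.
exact: leq_trans (sincr_geq k (sincr_comp Hf Hs)) (ltnW Hem).
Qed.

Lemma upper_zero g : is_zero lt g -> upper_bound g.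
Proof.
move=> Hz A HA h Hh HN.
have Hout : infinite_set (fun i => ~ A [fset h i]).
  move=> n; apply: NNPP => Hfin.
  have HAn m : n <= m -> A [fset h m] by move=> Hnm; apply: NNPP => HnA; apply: Hfin; exists m.
  apply: (HN _ (sincr_addn n)) => E.
  case/(tfam_succ_inv HO (osuccP HO g)) => [->|[m [E' [-> /(tfam_zero_inv Hz) ->]]]].
    by rewrite spread0; apply: hereditary0 HA (HAn n (leqnn n)).
  by rewrite spreadU1 spread0 fsetU0; apply: HAn; apply: leq_addr.
case: (infinite_enum Hout) => w Hw HwA; exists w => //.
exists (fun _ _ => [::]); split=> // B E HAE Hrng _.
case: (fset_0Vmem E) => [->|[m Hm]]; first exact: tfam0.
case: (Hrng m Hm) => x Hx; case: (HwA x); apply: HA HAE.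
by rewrite fsub1set Hx.
Qed.

Lemma upper_succ g b : is_succ_of lt g b -> upper_bound b -> upper_bound g.
Proof.
move=> Hgb IH A HA h Hh HN.
have Hg : osucc HO b = g := succ_unique HO (osuccP HO b) Hgb.
have Hdich a : hereditary a -> forall r, strictly_incr r -> dichotomy (eq^~ b) g a r.
  move=> Ha r Hr.
  case: (classic (exists2 t, strictly_incr t & never_large a g (fun x => r (t x)))).
  - case=> t Ht; rewrite -Hg => /(IH a Ha _ (sincr_comp Hr Ht)) [v Hv Hcaught].
    by left; exists (fun x => t (v x)); [apply: sincr_comp | exists b].
  - move=> Hno; right; apply: NNPP => Hright; apply: Hno; exists id => // t Ht Hall.
    by apply: Hright; exists t.
case: (tail_links HA Hh HN Hdich) => w Hw [s Hs Hlinks].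
have Hcaught k : caught lt ((fun _ => b) k) (link A (h (w (s k))))
    (tail (fun x => h (w x)) (s k)) by case: (Hlinks k) => c ->.
case: (caught_links (sincr_comp Hh Hw) Hs Hcaught) => req [Hreq Hup].
exists (fun k => w (s k)); first exact: sincr_comp.
exists req; split=> // B E HAE Hrng Hmeets.
case: (eqVneq E fset0) => [->|/(Hup B E HAE Hrng Hmeets) [k [_ _]]]; first exact: tfam0.
by rewrite Hg.
Qed.

Lemma upper_limit g : is_limit lt g -> (forall c, lt c g -> upper_bound c) -> upper_bound g.
Proof.
move=> Hl IH A HA h Hh HN.
have Hdich a : hereditary a -> forall r, strictly_incr r -> dichotomy (lt^~ g) g a r.
  move=> Ha r Hr.
  case: (classic (exists c t, [/\ lt c g, strictly_incr t &
      never_large a (osucc HO c) (fun x => r (t x))])) => [[c [t [Hc Ht HNa]]]|Hno].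
    case: (IH c Hc a Ha _ (sincr_comp Hr Ht) HNa) => v Hv Hcaught.
    by left; exists (fun x => t (v x)); [apply: sincr_comp | exists c].
  have Hlarge : large_seq lt Bfix (fun E => a (spread r E)) g.
    apply: (large_seq_limit HO HBfix Hl) => c Hc t Ht; apply: NNPP => Hnot.
    apply: Hno; exists c, t; split=> // u Hu Hall; apply: Hnot; exists u => // Z HZ.
    by rewrite -spread_comp; apply: Hall; apply: tfam_succ (osuccP HO c) HZ.
  right; case: (Hlarge id sincr_id) => t Ht HZ.
  by exists t => // Z /HZ; rewrite -spread_comp.
case: (tail_links HA Hh HN Hdich) => w Hw [s Hs Hlinks].
have /choice [c Hc] : forall k, exists c, lt c g /\
    caught lt c (link A (h (w (s k)))) (tail (fun x => h (w x)) (s k)).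
  by move=> k; case: (Hlinks k) => c; exists c.
case: (caught_links (sincr_comp Hh Hw) Hs (fun k => proj2 (Hc k))) => req [Hreq Hup].
(* Each element [h (w (s k))] must also approximate [g] by [c k + 1]. *)
pose ex := req_sum (fun k l m => if h (w (s k)) == m then
  (if excluded_middle_informative (l = g) then [:: osucc HO (c k)] else [::]) else [::]).
exists (fun k => w (s k)); first exact: sincr_comp.
exists (req_cat req ex); split.
  apply: req_cat_below => //; apply: req_sum_below => k l m c'.
  case: eqP => // _; case: excluded_middle_informative => // Hlg [<-|//].
  rewrite Hlg; exact: (limit_succ_lt HO Hl (proj1 (Hc k))).
move=> B E HAE Hrng /meets_cat [Hmeets Hex].
case: (eqVneq E fset0) => [->|/(Hup B E HAE Hrng Hmeets) [k [Hek Hmin HEk]]].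
  exact: tfam0.
apply: (tfamL Hl Hek Hmin _ HEk); apply: (Hex g _ _ Hek); apply/req_sumP; exists k; split.
  exact: (sincr_geq k (sincr_comp Hh (sincr_comp Hw Hs))).
by rewrite eqxx; case: (excluded_middle_informative (g = g)) => [_|[]] //=; left.
Qed.

Lemma upper g : upper_bound g.
Proof.
elim/(well_founded_ind (olt_wf HO)): g => g IH.
case: (ordinal_cases HO g) => [Hz|[[b Hgb]|Hl]].
- exact: upper_zero.
- by apply: (upper_succ Hgb); apply: IH; case: Hgb.
- exact: upper_limit.
Qed.

End UpperBound.

Lemma approx_of_req (O : Type) (lt : O -> O -> Prop) (req : O -> nat -> seq O) :
  is_omega1 lt -> req_below lt req ->
  exists2 B, approximating_family lt B & forall E, meets req B E.
Proof.
move=> HO Hreq.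
have /choice [enum Henum] : forall l, exists f : nat -> O, is_limit lt l ->
    (forall n, lt (f n) l) /\ forall b, lt b l -> exists n, f n = b.
  move=> l; case: (classic (is_limit lt l)) => [/(olt_enum_limit HO) [f Hf]|Hnl].
    by exists f.
  by exists (fun _ => l).
pose B m l :=
  req_cat (req_sum (fun k l _ => req l k)) (req_sum (fun k l _ => [:: enum l k])) l m.
exists B; last by move=> E l m c _ Hc; apply/List.in_app_iff; left; apply/req_sumP; exists m.
move=> l Hl; have [Henum_lt Henum_onto] := Henum l Hl; split.
- move=> n c /List.in_app_iff [] /req_sumP [k [_ Hc]]; first exact: Hreq Hc.
  by case: Hc => [<-|].
- move=> n c /List.in_app_iff [] /req_sumP [k [Hk Hc]]; apply/List.in_app_iff;
    [left|right]; apply/req_sumP; exists k; split=> //; exact: leqW.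
- move=> b /(proj2 Hl) [c [Hbc /Henum_onto [k Hk]]]; exists k, c; split=> //.
  by apply/List.in_app_iff; right; apply/req_sumP; exists k; split=> //; left.
Qed.

Section Index.
Variables (O : Type) (lt : O -> O -> Prop).
Hypothesis HO : is_omega1 lt.
Variables (Bfix : nat -> O -> seq O) (F : O -> {fset nat} -> Prop).
Hypotheses (HBfix : approximating_family lt Bfix) (HF : transfinite_family_of lt Bfix F).
Variables (A : {fset nat} -> Prop) (P : nat -> Prop).
Hypotheses (HA : hereditary A) (HAne : exists E, A E).

Let HFE := tfam_familyE HO HBfix HF.

Lemma large_on_lt a b : lt b a -> large_on F A a P -> large_on F A b P.
Proof.
move=> Hba Ha M HMP HMi; case: (tfam_lt_above HO HBfix Hba) => k Hk.
case: (Ha M HMP HMi) => g [Hg [HgM HgA]].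
exists (fun x => g (k + x)); split; first exact: sincr_comp Hg (sincr_addn k).
split=> // E /HFE HE; rewrite (spread_comp g (addn k)); apply/HgA/HFE/Hk.
  exact: (tfam_spread HBfix (sincr_addn k) HE).
by move=> _ /spreadP [x _ ->]; apply: leq_addr.
Qed.

Lemma large_seq_of_large_on b h : large_on F A b P -> strictly_incr h ->
  (forall i, P (h i)) -> large_seq lt Bfix (fun E => A (spread h E)) b.
Proof.
move=> Hb Hh HhP t Ht; have Hht := sincr_comp Hh Ht.
case: (Hb (fun m => exists x, h (t x) = m)) => [_ [x <-] //|n|g [Hg [HgM HgA]]].
  by exists (h (t n)); split; [apply: (sincr_geq n Hht) | exists n].
have /(sincr_factor Hht Hg) [u Hu Hgu] : forall x, exists y, g x = h (t y).
  by move=> x; case: (HgM x) => y <-; exists y.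
by exists u => // E /HFE HE; rewrite -spread_comp -Hgu; apply: HgA.
Qed.

Lemma index_large a0 : is_index lt F A P a0 -> large_on F A a0 P.
Proof.
case=> Hub Hlub.
have Hbelow c : lt c a0 -> exists a, large_on F A a P /\ lt c a.
  move=> Hc; apply: NNPP => Hn.
  have : ole lt a0 c.
    apply: Hlub => a Ha; case: (olt_total HO a c) => [|[|Hca]]; [left|right|] => //.
    by case: Hn; exists a.
  by case=> [/(olt_asym HO) /(_ Hc) | Heq] //; rewrite Heq in Hc; case: (olt_irr HO Hc).
case: (ordinal_cases HO a0) => [Hz|[[c [Hca0 Hc]]|Hl]].
- move=> M _ /infinite_enum [g Hg HgM]; exists g; do 2!split=> //.
  move=> E /HFE /(tfam_zero_inv Hz) ->; rewrite spread0.
  by case: HAne => E0; apply: hereditary0.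
- case: (Hbelow c Hca0) => a [Ha Hca]; case: (Hc a Hca) => [Ha0a|-> //].
  case: (Hub a Ha) => [/(olt_asym HO Ha0a) //|Haa0].
  by rewrite Haa0 in Ha0a; case: (olt_irr HO Ha0a).
- move=> M HMP /infinite_enum [h Hh HhM].
  have HhP i : P (h i) by apply: HMP.
  have Hlarge : large_seq lt Bfix (fun E => A (spread h E)) a0.
    apply: (large_seq_limit HO HBfix Hl) => b Hb; case: (Hbelow b Hb) => a [Ha Hba].
    exact: large_seq_of_large_on (large_on_lt Hba Ha) Hh HhP.
  case: (Hlarge id sincr_id) => u Hu HA0; exists (fun x => h (u x)).
  by split; [apply: sincr_comp | split=> // E /HFE /HA0; rewrite -spread_comp].
Qed.

Lemma index_not_large_succ a0 : is_index lt F A P a0 -> infinite_set P ->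
  exists2 h, strictly_incr h & (forall i, P (h i)) /\ never_large lt Bfix A (osucc HO a0) h.
Proof.
move=> [Hub _] HP.
have [M [HMP HMi HMnot]] : exists M : nat -> Prop,
    [/\ forall m, M m -> P m, infinite_set M & forall g, strictly_incr g ->
      (forall i, M (g i)) -> ~ (forall E, F (osucc HO a0) E -> A (spread g E))].
  apply: NNPP => Hno.
  have : large_on F A (osucc HO a0) P.
    move=> M HMP HMi; apply: NNPP => HnoM; apply: Hno; exists M; split=> // g Hg HgM HgA.
    by apply: HnoM; exists g.
  case/Hub => [/(olt_asym HO (olt_succ HO a0))|Heq] //.
  by have := olt_succ HO a0; rewrite Heq; apply: olt_irr.
case: (infinite_enum HMi) => h Hh HhM; exists h => //; split=> [i|t Ht HtA]; first exact: HMP.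
by apply: (HMnot _ (sincr_comp Hh Ht)) => [//|E /HFE]; apply: HtA.
Qed.

End Index.

Theorem theorem4p1
  (O : Type) (lt : O -> O -> Prop) (HO : is_omega1 lt)
  (Bfix : nat -> O -> seq O) (F : O -> {fset nat} -> Prop)
  (HBfix : approximating_family lt Bfix)
  (HF : transfinite_family_of lt Bfix F)
  (A : {fset nat} -> Prop) (HAne : exists E, A E) (HAh : hereditary A)
  (P : nat -> Prop) (HP : infinite_set P)
  (a0 : O) (Ha0 : is_index lt F A P a0) :
  exists B : nat -> O -> seq O, approximating_family lt B /\
  exists l : nat -> nat, strictly_incr l /\ (forall i, P (l i)) /\
    forall G : O -> {fset nat} -> Prop, transfinite_family_of lt B G ->
      (forall E, G a0 E -> A (spread l E)) /\
      (forall E, A E -> (forall n, n \in E -> exists i, l i = n) -> G a0 E).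
Proof.
case: (index_not_large_succ HO HBfix HF Ha0 HP) => h Hh [HhP HN].
case: (upper HBfix HAh Hh HN) => w Hw [req [Hreq Hcaught]].
case: (approx_of_req HO Hreq) => B HB HBreq; exists B; split=> //.
have Hhw := sincr_comp Hh Hw.
have [u Hu HAu] := large_seq_of_large_on HO HBfix HF (index_large HO HBfix HF HAh HAne Ha0)
  Hhw (fun i => HhP (w i)) sincr_id.
have [v Hv Hcmp] := tfam_compare a0 HO HB HBfix sincr_id.
exists (fun x => h (w (u (v x)))); split; first exact: sincr_comp Hhw (sincr_comp Hu Hv).
split=> [i|G HG]; first exact: HhP.
have HGE := tfam_familyE HO HB HG; split=> [E /HGE /Hcmp HE | E HAE Hrng].
  by rewrite (spread_comp (fun x => h (w (u x))) v) (spread_comp (fun x => h (w x)) u); apply: HAu.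
apply/HGE; apply: Hcaught HAE _ (HBreq E) => m /Hrng [i <-]; by exists (u (v i)).
Qed.
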